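(* Let $n\ge 1$, $m\ge 2$, $0\le k\le n-1$ with $(m,k)\ne(2,0)$. Then the class $\mathcal{C}^k_{ac}$ of all complete $k$-bounded acyclic CP-nets over $n$ variables of domain size $m$, over the instance space $\mathcal{X}_{swap}$ (for any admissible choice of $\mathcal{X}_{swap}$), is not intersection-closed.
   Context: Variables $V=\{v_1,\dots,v_n\}$, each with a finite domain of size $m$. An outcome assigns a value to every variable; $\mathcal{O}_X$ denotes assignments to $X\subseteq V$. A complete CP-net specifies for each $v_i$ a parent set $Pa(v_i)\subseteq V\setminus\{v_i\}$ and, for each context $\gamma\in\mathcal{O}_{Pa(v_i)}$, a strict total order $\succ^{v_i}_\gamma$ on $D_{v_i}$; parents are non-dummy. Acyclic: graph with edges $(v_j,v_i)$, $v_j\in Pa(v_i)$, acyclic; $k$-bounded: all $|Pa(v_i)|\le k$. Improving flip: changing only $v_i$ to a value preferred under $\succ^{v_i}_{o[Pa(v_i)]}$; $o'\succ o$ iff a nonempty sequence of improving flips leads from $o$ to $o'$. A swap is an ordered pair $x=(x.1,x.2)$ of outcomes differing in exactly one variable; $\mathcal{X}_{swap}$ is any set containing exactly one of the two orderings of each such pair (an admissible choice). A CP-net $N$ is the concept $c_N=\{x\in\mathcal{X}_{swap}: x.1\succ x.2\text{ under }N\}$. A class $\mathcal{C}$ of concepts (subsets of the instance space) is intersection-closed if $c\cap c'\in\mathcal{C}$ for all $c,c'\in\mathcal{C}$. *)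

From mathcomp Require Import all_boot.
Set Implicit Arguments. Unset Strict Implicit. Unset Printing Implicit Defensive.

Definition outcome (n m : nat) := {ffun 'I_n -> 'I_m}.

(* A CP-net: parent sets and, for every variable i and outcome o, the
   conditional preference relation  pref i o x y  meaning  x >_{o[Pa(i)]} y.
   Well-formedness (below) requires pref i o to depend only on o[Pa(i)],
   so pref i is exactly a family of orders indexed by contexts. *)
Record cpnet (n m : nat) := CPNet {
  pa : 'I_n -> {set 'I_n};
  pref : 'I_n -> outcome n m -> rel 'I_m
}.

Definition strict_total_order (m : nat) (r : rel 'I_m) : Prop :=
  (forall x, ~~ r x x) /\
  (forall x y z, r x y -> r y z -> r x z) /\
  (forall x y, x != y -> r x y || r y x).

Definition is_cpnet n m (N : cpnet n m) : Prop :=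
  (forall i, i \notin pa N i) /\
  (forall i (o o' : outcome n m),
      (forall j, j \in pa N i -> o j = o' j) ->
      forall x y, pref N i o x y = pref N i o' x y) /\
  (forall i o, strict_total_order (pref N i o)) /\
  (forall i j, j \in pa N i ->
      exists (o o' : outcome n m),
        (forall l, l != j -> o l = o' l) /\
        exists x y, pref N i o x y != pref N i o' x y).

Definition acyclic n m (N : cpnet n m) : Prop :=
  forall i (p : seq 'I_n),
    path (fun a b => a \in pa N b) i p -> last i p = i -> p = [::].

Definition k_bounded n m (k : nat) (N : cpnet n m) : Prop :=
  forall i, #|pa N i| <= k.

Definition flip n m (N : cpnet n m) : rel (outcome n m) :=
  fun o o' => [exists i, [forall j, (j != i) ==> (o j == o' j)]
                         && pref N i o (o' i) (o i)].

(* better N o' o  :  o' > o, i.e. a nonempty sequence of improving flips leads from o to o' *)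
Definition better n m (N : cpnet n m) (o' o : outcome n m) : bool :=
  [exists o1, flip N o o1 && connect (flip N) o1 o'].

Definition is_swap n m (x : outcome n m * outcome n m) : bool :=
  #|[set i | x.1 i != x.2 i]| == 1.

Definition admissible_Xswap n m (X : {set outcome n m * outcome n m}) : Prop :=
  (forall x, x \in X -> is_swap x) /\
  (forall x, is_swap x -> ((x.1, x.2) \in X) != ((x.2, x.1) \in X)).

Definition concept n m (X : {set outcome n m * outcome n m}) (N : cpnet n m)
  : {set outcome n m * outcome n m} :=
  [set x in X | better N x.1 x.2].

Definition C_ac n m k (X : {set outcome n m * outcome n m})
  (c : {set outcome n m * outcome n m}) : Prop :=
  exists N : cpnet n m, [/\ is_cpnet N, acyclic N, k_bounded k N & c = concept X N].

Definition intersection_closed (T : finType) (C : {set T} -> Prop) : Prop :=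
  forall c c', C c -> C c' -> C (c :&: c').

From mathcomp Require Import all_boot.
Set Implicit Arguments. Unset Strict Implicit. Unset Printing Implicit Defensive.

(* Take a cycle of outcomes c_0, ..., c_L = c_0 (L >= 3) whose consecutive
   outcomes form swaps. Each swap has exactly one ordering in X, so by
   pigeonhole the cycle has an orientation in which two edges e1 <> e2 have
   their reverse in X. Let N1, N2 be nets of the class improving along every
   edge of that orientation except e1, resp. e2, and suppose some net N of the
   class has c_N = c_N1 :&: c_N2. An edge lying in X is in both concepts, hence
   in c_N. For an edge whose reverse lies in X, some N_i improves along it, so
   by consistency of N_i the reverse is not in c_N; as N is complete, it
   improves along the edge. So N improves all around the cycle, contradicting
   the consistency of acyclic CP-nets. For k = 0 (hence m >= 3) the cycle runs
   through three values of one variable and the nets are parentless; for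
   k >= 1 it is the square on two values of two variables, and the nets have a
   single arc. *)

Section Preferences.
Variables (n m : nat) (N : cpnet n m).

Lemma flip_better (o o' : outcome n m) : flip N o o' -> better N o' o.
Proof. by move=> h; apply/existsP; exists o'; rewrite h connect0. Qed.

Lemma better_trans : transitive (better N).
Proof.
move=> b a c /existsP [o1 /andP [f1 c1]] /existsP [o2 /andP [f2 c2]].
apply/existsP; exists o2; rewrite f2 /=.
by apply: connect_trans c2 _; apply: connect_trans c1; apply: connect1.
Qed.

Lemma better_flip_at (s t : outcome n m) i :
  (forall j, j != i -> s j = t j) -> pref N i t (s i) (t i) -> better N s t.
Proof.
move=> eq_st lt_st; apply: flip_better; apply/existsP; exists i.
by rewrite lt_st andbT; apply/forallP => j; apply/implyP => /eq_st ->.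
Qed.

Hypothesis HN : is_cpnet N.

Lemma swap_better_total (s t : outcome n m) :
  is_swap (s, t) -> better N s t || better N t s.
Proof.
have [pa_irr [pref_local [pref_sto _]]] := HN.
case/cards1P => i /= diff_st.
have eq_st j : j != i -> s j = t j.
  by move=> ji; apply/eqP; apply: contraNT ji => h; rewrite -in_set1 -diff_st inE.
have ne_st : s i != t i by have := set11 i; rewrite -diff_st inE.
have [_ [_ total]] := pref_sto i t.
case/orP: (total _ _ ne_st) => [lt_st | lt_ts].
  by rewrite (better_flip_at eq_st lt_st).
apply/orP; right; apply: (better_flip_at (i := i)) => [j ji|].
  by rewrite (eq_st j ji).
rewrite (pref_local i s t) // => j pa_j; apply: eq_st.
by apply: contraTneq pa_j => ->.
Qed.

Lemma flip_path_pref_mono i (o : outcome n m) a s :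
  path (flip N) a s ->
  (forall c, c \in a :: s -> forall j, j \in pa N i -> c j = o j) ->
  (last a s i == a i) || pref N i o (last a s i) (a i).
Proof.
have [_ [pref_local [pref_sto _]]] := HN; have [_ [lt_trans _]] := pref_sto i o.
elim: s a => [|b s IHs] a /=; first by rewrite eqxx.
case/andP=> /existsP [v /andP [/forallP eq_ab lt_ba]] path_bs ctx_o.
have step : (b i == a i) || pref N i o (b i) (a i).
  case: (eqVneq v i) lt_ba => [-> lt_ba|vi _].
    by rewrite -(pref_local i a o) ?lt_ba ?orbT // => j; apply/ctx_o/mem_head.
  by move: (eq_ab i); rewrite eq_sym vi => /eqP ->; rewrite eqxx.
have ctx_b c : c \in b :: s -> forall j, j \in pa N i -> c j = o j.
  by move=> sc; apply: ctx_o; rewrite inE sc orbT.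
case/orP: (IHs b path_bs ctx_b) => [/eqP ->|lt1] //.
by case/orP: step => [/eqP <-|lt2]; rewrite ?lt1 ?(lt_trans _ _ _ lt1 lt2) orbT.
Qed.

Hypothesis HA : acyclic N.

Definition ancestors i :=
  [set j | [exists p in pa N i, connect (fun a b => a \in pa N b) j p]].

Lemma ancestors_parent_lt i j : j \in pa N i -> #|ancestors j| < #|ancestors i|.
Proof.
move=> pa_j; apply: proper_card; rewrite properE; apply/andP; split.
  apply/subsetP=> x; rewrite !inE => /existsP [p /andP [pa_p anc_p]].
  apply/existsP; exists j; rewrite pa_j /=.
  by apply: connect_trans anc_p _; apply: connect1.
apply/subsetPn; exists j.
  by rewrite inE; apply/existsP; exists j; rewrite pa_j connect0.
rewrite inE; apply/negP => /existsP [p /andP [pa_p /connectP [s path_s last_s]]].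
have := @HA j (rcons s j); rewrite last_rcons rcons_path path_s -last_s pa_p.
by move=> /(_ isT erefl); case: s {path_s last_s}.
Qed.

(* By induction on the number of ancestors of [i], its parents are constant
   along the cycle, so all flips of [i] improve for one strict order. *)
Lemma flip_cycle_invariant i (o : outcome n m) s :
  path (flip N) o s -> last o s = o -> forall c, c \in s -> c i = o i.
Proof.
have [_ [_ [pref_sto _]]] := HN.
move=> path_s last_s; have [k] := ubnP #|ancestors i|.
elim: k i => // k IHk i /ltnSE anc_i.
have ctx_o c : c \in o :: s -> forall j, j \in pa N i -> c j = o j.
  rewrite inE => /predU1P [-> //|sc] j pa_j.
  exact: IHk (leq_trans (ancestors_parent_lt pa_j) anc_i) _ sc.
move=> c sc; have [irr [lt_trans _]] := pref_sto i o.
case/path.splitP: sc path_s last_s ctx_o => s1 s2.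
rewrite cat_path last_cat last_rcons => /andP [path1 path2] last2 ctx_o.
have ctx1 d : d \in o :: rcons s1 c -> forall j, j \in pa N i -> d j = o j.
  by move=> d1; apply: ctx_o; rewrite -cat_cons mem_cat d1.
have ctx2 d : d \in c :: s2 -> forall j, j \in pa N i -> d j = o j.
  move=> d2; apply: ctx_o; move: d2.
  by rewrite !inE mem_cat mem_rcons inE => /orP [->|->]; rewrite !orbT.
have := flip_path_pref_mono path1 ctx1; rewrite last_rcons => /orP [/eqP // | lt_co].
have := flip_path_pref_mono path2 ctx2; rewrite last2 => /orP [/eqP // | lt_oc].
by have := irr (o i); rewrite (lt_trans _ _ _ lt_oc lt_co).
Qed.

Lemma acyclic_consistent o : ~~ better N o o.
Proof.
apply/negP => /existsP [o1 /andP [flip_o /connectP [s path_s last_s]]].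
have o1_eq : o1 = o.
  apply/ffunP => i; apply: (@flip_cycle_invariant i o (o1 :: s)) => /=.
  - by rewrite flip_o path_s.
  - by [].
  - exact: mem_head.
move: flip_o; rewrite o1_eq => /existsP [v /andP [_]].
have [_ [_ [pref_sto _]]] := HN; have [irr _] := pref_sto v o.
by rewrite (negbTE (irr _)).
Qed.

End Preferences.

Lemma is_swapC n m (s t : outcome n m) : is_swap (t, s) = is_swap (s, t).
Proof. by rewrite /is_swap /=; congr (_ == 1); apply: eq_card => i; rewrite !inE eq_sym. Qed.

Lemma is_swap_at n m (s t : outcome n m) i :
  s i != t i -> (forall j, j != i -> s j = t j) -> is_swap (s, t).
Proof.
move=> ne_st eq_st; apply/cards1P; exists i; apply/setP => j; rewrite !inE /=.
by have [->|ji] := eqVneq j i; rewrite ?ne_st ?eq_st ?eqxx.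
Qed.

Lemma trans_chain (T : Type) (R : rel T) (f : nat -> T) L :
  transitive R -> 0 < L -> (forall j, j < L -> R (f j) (f j.+1)) -> R (f 0) (f L).
Proof.
move=> trR; case: L => // L _; elim: L => [|L IHL] step; first exact: step.
by apply: trR (IHL _) (step _ _) => // j /ltnW; apply: step.
Qed.

Lemma bool_pigeonhole (f : nat -> bool) :
  exists j1 j2, [/\ j1 < j2, j2 < 3 & f j1 = f j2].
Proof.
case e0: (f 0); case e1: (f 1); case e2: (f 2);
  by [exists 0, 1; rewrite e0 e1 | exists 0, 2; rewrite e0 e2 | exists 1, 2; rewrite e1 e2].
Qed.

Definition cycle_edge (T : Type) (c : nat -> T) (b : bool) j :=
  if b then (c j, c j.+1) else (c j.+1, c j).

Lemma better_cycle n m (N : cpnet n m) L (c : nat -> outcome n m) b :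
  0 < L -> c L = c 0 ->
  (forall j, j < L -> better N (cycle_edge c b j).1 (cycle_edge c b j).2) ->
  better N (c 0) (c 0).
Proof.
move=> L_gt0 c_L; case: b => along.
  by rewrite -{2}c_L (trans_chain (@better_trans _ _ N) L_gt0 along).
have better_rev : transitive (fun x y => better N y x).
  by move=> y x z xy yz; apply: better_trans yz xy.
by rewrite -{1}c_L (trans_chain better_rev L_gt0 along).
Qed.

Definition bounded_acyclic n m k (N : cpnet n m) :=
  [/\ is_cpnet N, acyclic N & k_bounded k N].

Section Intersection.
Variables (n m k : nat) (X : {set outcome n m * outcome n m}).
Hypothesis HX : admissible_Xswap X.

Lemma better_meet (N N1 N2 : cpnet n m) (x : outcome n m * outcome n m) :
  is_cpnet N -> is_cpnet N1 -> acyclic N1 -> is_cpnet N2 -> acyclic N2 ->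
  concept X N = concept X N1 :&: concept X N2 -> is_swap x ->
  (if x \in X then better N1 x.1 x.2 && better N2 x.1 x.2
   else better N1 x.1 x.2 || better N2 x.1 x.2) ->
  better N x.1 x.2.
Proof.
case: x => s t /= HN HN1 HA1 HN2 HA2 meet swap_st.
case: ifP => st_X better_st.
  have : (s, t) \in concept X N by rewrite meet !inE st_X.
  by rewrite inE => /andP [].
have ts_X : (t, s) \in X.
  by have [_ adm] := HX; have := adm _ swap_st; rewrite /= st_X negbK.
have not_better_ts : ~~ (better N1 t s && better N2 t s).
  apply/negP => /andP [ts1 ts2]; case/orP: better_st => [st1 | st2].
    by have := acyclic_consistent HN1 HA1 s; rewrite (better_trans st1 ts1).
  by have := acyclic_consistent HN2 HA2 s; rewrite (better_trans st2 ts2).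
have : (t, s) \notin concept X N by rewrite meet !inE ts_X.
by rewrite inE ts_X /=; case/orP: (swap_better_total HN swap_st) => // ->.
Qed.

Lemma not_closed_of_cycle L (c : nat -> outcome n m) :
  2 < L -> c L = c 0 -> (forall j, j < L -> is_swap (c j, c j.+1)) ->
  (forall b j0, j0 < L -> exists2 N, bounded_acyclic k N &
     forall j, j < L -> j != j0 -> better N (cycle_edge c b j).1 (cycle_edge c b j).2) ->
  ~ intersection_closed (C_ac k X).
Proof.
move=> L_gt2 c_L swap_c realize closed.
have swap_edge b j : j < L -> is_swap (cycle_edge c b j).
  by move=> /swap_c swap_j; case: b; rewrite /cycle_edge // is_swapC.
(* Edge [j] is soft for the orientation [b] if its reverse lies in [X]. Each
   edge is soft for exactly one orientation, so two of the first three edges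
   are soft for a common one. *)
pose soft b j := cycle_edge c b j \notin X.
have soft_self j : j < L -> soft (soft true j) j.
  move=> jL; have [_ /(_ _ (swap_edge true j jL))] := HX.
  by rewrite /soft /cycle_edge /=; case: ifPn => [/negPf -> | /negPn ->].
have [j1 [j2 [lt12 lt2 soft12]]] := bool_pigeonhole (soft true).
have j2L : j2 < L := leq_trans lt2 L_gt2.
have j1L : j1 < L := ltn_trans lt12 j2L.
set b := soft true j1.
have soft1 : soft b j1 := soft_self j1 j1L.
have soft2 : soft b j2 by rewrite /b soft12; apply: soft_self.
have [N1 [HN1 HA1 HK1] along1] := realize b j1 j1L.
have [N2 [HN2 HA2 HK2] along2] := realize b j2 j2L.
have [N [HN HA _ meet]] := closed (concept X N1) (concept X N2)
  (ex_intro _ N1 (And4 HN1 HA1 HK1 erefl)) (ex_intro _ N2 (And4 HN2 HA2 HK2 erefl)).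
have along j : j < L -> better N (cycle_edge c b j).1 (cycle_edge c b j).2.
  move=> jL; apply: (better_meet HN HN1 HA1 HN2 HA2 (esym meet) (swap_edge b j jL)).
  case: ifPn => [hard | _].
    by rewrite along1 ?along2 //; apply: contraTneq hard => ->.
  case: (eqVneq j j1) => [-> | ne1]; last by rewrite along1.
  by rewrite along2 ?orbT // ltn_eqF.
have := acyclic_consistent HN HA (c 0).
by rewrite (better_cycle (ltnW (ltnW L_gt2)) c_L along).
Qed.

End Intersection.

Definition ranked m (s : seq 'I_m) : rel 'I_m :=
  fun x y => index x (s ++ enum 'I_m) < index y (s ++ enum 'I_m).

Lemma ranked_strict_total m (s : seq 'I_m) : strict_total_order (ranked s).
Proof.
split; first by move=> x; rewrite /ranked ltnn.
split; first by move=> x y z; apply: ltn_trans.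
move=> x y; apply: contraNT; rewrite /ranked negb_or -!leqNgt => le_idx.
have mem_all z : z \in s ++ enum 'I_m by rewrite mem_cat mem_enum orbT.
by rewrite -(nth_index x (mem_all x)) -(nth_index x (mem_all y)) (anti_leq le_idx).
Qed.

Definition parentless_net n m (s : seq 'I_m) : cpnet n m :=
  CPNet (fun _ => set0) (fun _ _ => ranked s).

Lemma parentless_net_bounded_acyclic n m k (s : seq 'I_m) :
  bounded_acyclic k (parentless_net n s).
Proof.
split.
- split=> [i|]; first by rewrite inE.
  split=> //; split=> [*|i j]; [exact: ranked_strict_total | by rewrite inE].
- by move=> i [|x p] //=; rewrite inE.
- by move=> i; rewrite cards0.
Qed.

Section ThreeValueCycle.
Variables (n m k : nat) (X : {set outcome n m * outcome n m}).
Hypotheses (n_gt0 : 0 < n) (m_gt2 : 2 < m).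

Let P : 'I_n := Ordinal n_gt0.
Let v0 : 'I_m := Ordinal (ltnW (ltnW m_gt2)).
Let v1 : 'I_m := Ordinal (ltnW m_gt2).
Let v2 : 'I_m := Ordinal m_gt2.

Let at_P (v : 'I_m) : outcome n m := [ffun j => if j == P then v else v0].

Let at_P_swap (a b : 'I_m) : a != b -> is_swap (at_P a, at_P b).
Proof.
move=> ne_ab; apply: (is_swap_at (i := P)) => [|j jP].
  by rewrite !ffunE !eqxx.
by rewrite !ffunE (negbTE jP).
Qed.

Let better_at_P N (a b : 'I_m) : pref N P (at_P b) a b -> better N (at_P a) (at_P b).
Proof.
move=> lt_ab; apply: (better_flip_at (i := P)) => [j jP|].
  by rewrite !ffunE (negbTE jP).
by rewrite !ffunE !eqxx.
Qed.

Lemma three_value_cycle_not_closed :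
  admissible_Xswap X -> ~ intersection_closed (C_ac k X).
Proof.
move=> HX; apply: (@not_closed_of_cycle _ _ _ _ HX 3
  (nth (at_P v0) [:: at_P v0; at_P v1; at_P v2; at_P v0])) => //.
  by case=> [|[|[|]]] //= _; apply: at_P_swap.
move=> b j0 j0_lt3.
(* rank the values along the cycle, starting right after the missing edge *)
exists (parentless_net n (nth [::] (if b
    then [:: [:: v1; v2; v0]; [:: v2; v0; v1]; [:: v0; v1; v2]]
    else [:: [:: v0; v2; v1]; [:: v1; v0; v2]; [:: v2; v1; v0]]) j0)).
  exact: parentless_net_bounded_acyclic.
by case: b; case: j0 j0_lt3 => [|[|[|]]] // _ [|[|[|]]] // _ _; apply: better_at_P.
Qed.

End ThreeValueCycle.

Definition pair_order m (v0 v1 : 'I_m) (b : bool) : rel 'I_m :=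
  ranked (if b then [:: v0; v1] else [:: v1; v0]).

Lemma pair_order01 m (v0 v1 : 'I_m) b : v0 != v1 -> pair_order v0 v1 b v0 v1 = b.
Proof.
by move=> ne01; case: b; rewrite /pair_order /ranked /= !eqxx ?(eq_sym v1 v0) (negbTE ne01).
Qed.

Definition arc_net n m (P Q : 'I_n) (v0 v1 : 'I_m) (bP bQ : bool) : cpnet n m :=
  CPNet (fun i => if i == Q then [set P] else set0)
        (fun i o => pair_order v0 v1 (if i == Q then bQ == (o P == v0) else bP)).

Lemma arc_net_bounded_acyclic n m k (P Q : 'I_n) (v0 v1 : 'I_m) bP bQ :
  P != Q -> v0 != v1 -> 0 < k -> bounded_acyclic k (arc_net P Q v0 v1 bP bQ).
Proof.
move=> nePQ ne01 k_gt0.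
have pa_N a b : (a \in pa (arc_net P Q v0 v1 bP bQ) b) = (b == Q) && (a == P).
  by rewrite /=; case: (b == Q); rewrite ?inE.
have pa_irr i : i \notin pa (arc_net P Q v0 v1 bP bQ) i.
  by rewrite pa_N; apply/andP => -[/eqP -> /eqP eQP]; rewrite eQP eqxx in nePQ.
split; last by move=> i /=; case: (i == Q); rewrite ?cards1 ?cards0.
- split=> //; split.
    move=> i o o' ctx x y /=; case: (eqVneq i Q) => // iQ.
    by rewrite ctx // pa_N iQ !eqxx.
  split=> [*|i j]; first exact: ranked_strict_total.
  rewrite pa_N => /andP [/eqP -> /eqP ->].
  exists [ffun _ => v0], [ffun l => if l == P then v1 else v0]; split.
    by move=> l lP; rewrite !ffunE (negbTE lP).
  exists v0, v1; rewrite /= !ffunE !eqxx !pair_order01 //.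
  by rewrite (eq_sym v1) (negbTE ne01); case: (bQ).
- move=> i [|x [|y p]] //=.
    by rewrite andbT => + xi; rewrite xi (negbTE (pa_irr i)).
  rewrite !pa_N => /and3P [/andP [/eqP xQ _] /andP [_ /eqP xP] _].
  by move: nePQ; rewrite -xQ xP eqxx.
Qed.

Section FourCycle.
Variables (n m k : nat) (X : {set outcome n m * outcome n m}).
Hypotheses (n_gt1 : 1 < n) (m_gt1 : 1 < m) (k_gt0 : 0 < k).

Let P : 'I_n := Ordinal (ltnW n_gt1).
Let Q : 'I_n := Ordinal n_gt1.
Let v0 : 'I_m := Ordinal (ltnW m_gt1).
Let v1 : 'I_m := Ordinal m_gt1.

Let bit (z : bool) := if z then v1 else v0.
Let sq (zP zQ : bool) : outcome n m :=
  [ffun j => if j == P then bit zP else if j == Q then bit zQ else v0].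

Let sq_P a z : sq a z P = bit a. Proof. by rewrite ffunE. Qed.
Let sq_Q z a : sq z a Q = bit a. Proof. by rewrite ffunE. Qed.
Let sq_off_P a a' z j : j != P -> sq a z j = sq a' z j.
Proof. by move=> jP; rewrite !ffunE (negbTE jP). Qed.
Let sq_off_Q z a a' j : j != Q -> sq z a j = sq z a' j.
Proof. by move=> jQ; rewrite !ffunE (negbTE jQ). Qed.

Let sq_swap_P a a' z : a != a' -> is_swap (sq a z, sq a' z).
Proof.
move=> ne_aa'; apply: (is_swap_at (i := P)) => [|j]; last exact: sq_off_P.
by rewrite !sq_P; case: a a' ne_aa' => [] [].
Qed.

Let sq_swap_Q z a a' : a != a' -> is_swap (sq z a, sq z a').
Proof.
move=> ne_aa'; apply: (is_swap_at (i := Q)) => [|j]; last exact: sq_off_Q.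
by rewrite !sq_Q; case: a a' ne_aa' => [] [].
Qed.

Let better_sq_P N a a' z :
  pref N P (sq a' z) (bit a) (bit a') -> better N (sq a z) (sq a' z).
Proof.
move=> lt_aa'; apply: (better_flip_at (i := P)) => [j jP|]; first exact: sq_off_P.
by rewrite !sq_P.
Qed.

Let better_sq_Q N z a a' :
  pref N Q (sq z a') (bit a) (bit a') -> better N (sq z a) (sq z a').
Proof.
move=> lt_aa'; apply: (better_flip_at (i := Q)) => [j jQ|]; first exact: sq_off_Q.
by rewrite !sq_Q.
Qed.

Lemma four_cycle_not_closed : admissible_Xswap X -> ~ intersection_closed (C_ac k X).
Proof.
move=> HX; apply: (@not_closed_of_cycle _ _ _ _ HX 4 (nth (sq false false)
  [:: sq false false; sq true false; sq true true; sq false true; sq false false])) => //.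
  by case=> [|[|[|[|]]]] //= _; first [apply: sq_swap_P | apply: sq_swap_Q].
move=> b j0 j0_lt4.
(* Edges 0 and 2 flip [P], edges 1 and 3 flip [Q]. The two flips of a variable
   go opposite ways, so that variable must depend on the other one, unless one
   of its flips is the omitted edge. *)
exists (if odd j0 then arc_net Q P v0 v1 (b == (j0 == 3)) b
        else arc_net P Q v0 v1 (b == (j0 == 2)) (~~ b)).
  by case: (odd j0); apply: arc_net_bounded_acyclic.
case: b; case: j0 j0_lt4 => [|[|[|[|]]]] // _ [|[|[|[|]]]] //= _ _;
  first [apply: better_sq_P | apply: better_sq_Q]; by rewrite /= ?sq_P ?sq_Q.
Qed.

End FourCycle.

Theorem proposition6 (n m k : nat) :
  1 <= n -> 2 <= m -> k <= n - 1 -> (m, k) <> (2, 0) ->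
  forall X : {set outcome n m * outcome n m},
    admissible_Xswap X -> ~ intersection_closed (C_ac k X).
Proof.
move=> n_gt0 m_gt1 le_kn mk_ne2 X.
case: k le_kn mk_ne2 => [|k] le_kn mk_ne2.
  have m_gt2 : 2 < m.
    by rewrite ltn_neqAle m_gt1 andbT eq_sym; apply/eqP => m2; apply: mk_ne2; rewrite m2.
  exact: three_value_cycle_not_closed n_gt0 m_gt2.
have n_gt1 : 1 < n by rewrite -subn_gt0 (leq_trans _ le_kn).
exact: four_cycle_not_closed n_gt1 m_gt1 (ltn0Sn k).
Qed.
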